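(* The normalizer of $\widehat{\operatorname{IET}^{+}_{\mathrm{rc}}}$ in $\widehat{\operatorname{IET}^{\bowtie}}$ is $\widehat{\operatorname{IET}^{+}_{\mathrm{rc}}}$.
   Context: $X=[0,1[$. $\widehat{\operatorname{IET}^{\bowtie}}$ is the group of bijections $f:X\to X$ for which there is a finite partition of $X$ into intervals $[a,b[$ such that on each open interval $]a,b[$, $f$ has the form $x\mapsto x+c$ or $x\mapsto -x+c$; $\widehat{\operatorname{IET}^{+}}$ is the subgroup of those for which only the form $x\mapsto x+c$ occurs, and $\widehat{\operatorname{IET}^{+}_{\mathrm{rc}}}$ is the subgroup of right-continuous elements of $\widehat{\operatorname{IET}^{+}}$. *)

From Stdlib Require Import Reals Lra.
Open Scope R_scope.

Definition inX (x : R) : Prop := 0 <= x < 1.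

(* f restricts to a bijection X -> X (values outside X are irrelevant). *)
Definition bijX (f : R -> R) : Prop :=
  (forall x, inX x -> inX (f x)) /\
  (forall x y, inX x -> inX y -> f x = f y -> x = y) /\
  (forall y, inX y -> exists x, inX x /\ f x = y).

(* A finite partition of X into intervals [a i, a (i+1)[, i < n, given by
   0 = a 0 < a 1 < ... < a n = 1. *)
Definition partitionX (n : nat) (a : nat -> R) : Prop :=
  a 0%nat = 0 /\ a n = 1 /\ (forall i, (i < n)%nat -> a i < a (S i)).

(* Element of IET^bowtie-hat: bijection of X, piecewise x |-> x + c or
   x |-> -x + c on the open intervals of a finite partition. *)
Definition IET_bowtie (f : R -> R) : Prop :=
  bijX f /\
  exists (n : nat) (a : nat -> R), partitionX n a /\
    forall i, (i < n)%nat -> exists c : R,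
      (forall x, a i < x < a (S i) -> f x = x + c) \/
      (forall x, a i < x < a (S i) -> f x = - x + c).

Definition IET_plus (f : R -> R) : Prop :=
  bijX f /\
  exists (n : nat) (a : nat -> R), partitionX n a /\
    forall i, (i < n)%nat -> exists c : R,
      (forall x, a i < x < a (S i) -> f x = x + c).

Definition right_continuous_on_X (f : R -> R) : Prop :=
  forall x, inX x -> forall eps, 0 < eps -> exists delta, 0 < delta /\
    forall y, inX y -> x <= y < x + delta -> Rabs (f y - f x) < eps.

Definition IET_rc (f : R -> R) : Prop :=
  IET_plus f /\ right_continuous_on_X f.

Definition inverse_on_X (g ginv : R -> R) : Prop :=
  forall x, inX x -> ginv (g x) = x /\ g (ginv x) = x.

Definition normalizes (H : (R -> R) -> Prop) (g ginv : R -> R) : Prop :=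
  (forall h, H h -> H (fun x => g (h (ginv x)))) /\
  (forall h, H h -> H (fun x => ginv (h (g x)))).

From Stdlib Require Import Reals Lra Lia List.
Import ListNotations.
Open Scope R_scope.

(* Right-continuity lets one read the elements of IET^+_rc as the bijections
   of X that are translations on every interval [a_i, a_(i+1)[ of a finite
   partition.  Refining partitions along finitely many break points shows
   that this class is stable under composition and inversion, so it is a
   subgroup normalizing itself.

   Conversely let g in IET^bowtie normalize IET^+_rc.  If g reversed
   orientation on some ]u, v[, take q < r inside it and let h exchange [0, q[
   with [q, r[: just to the right of g q the conjugate g h g^-1 is a
   translation with limit g r, while its value at g q is g 0, so it is not
   right-continuous.  If g is a translation by c on ]u, v[, let h be the
   rotation that carries u + c into the image of the midpoint z of ]u, v[:
   just to the right of u, g^-1 h g is a translation with limit z, and its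
   right-continuity at u forces g u = u + c. *)

Definition chain (u v : R) (n : nat) (a : nat -> R) : Prop :=
  a 0%nat = u /\ a n = v /\ forall i, (i < n)%nat -> a i < a (S i).

Definition piecewise (P : R -> R -> Prop) (u v : R) : Prop :=
  exists n a, chain u v n a /\ forall i, (i < n)%nat -> P (a i) (a (S i)).

Definition breaks (n : nat) (a : nat -> R) : list R := map a (seq 0 (S n)).

Lemma in_breaks n a j : (j <= n)%nat -> In (a j) (breaks n a).
Proof. intros Hj. apply in_map, in_seq. lia. Qed.

Lemma chain_lt u v n a j k : chain u v n a -> (j < k <= n)%nat -> a j < a k.
Proof.
  intros [_ [_ Hstep]]. induction k as [|k IH]; intros Hjk; [lia|].
  destruct (Nat.eq_dec j k) as [->|Hne]; [apply Hstep; lia|].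
  apply Rlt_trans with (a k); [apply IH; lia | apply Hstep; lia].
Qed.

Lemma chain_step_bounds u v n a i : chain u v n a -> (i < n)%nat ->
  u <= a i /\ a i < a (S i) /\ a (S i) <= v.
Proof.
  intros Ha Hi. pose proof Ha as [H0 [Hn _]]. split; [|split].
  - destruct i; [lra|]. rewrite <- H0. left. apply (chain_lt u v n); [exact Ha | lia].
  - apply (chain_lt u v n); [exact Ha | lia].
  - destruct (Nat.eq_dec (S i) n) as [->|Hne]; [lra|].
    rewrite <- Hn. left. apply (chain_lt u v n); [exact Ha | lia].
Qed.

Lemma chain_locate u v n a x : chain u v n a -> u <= x < v ->
  exists i, (i < n)%nat /\ a i <= x < a (S i).
Proof.
  intros [<- [<- _]]. induction n as [|n IH]; intros Hx; [lra|].
  destruct (Rlt_dec x (a n)) as [Hlt|Hge].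
  - destruct IH as [i [Hi Hloc]]; [lra|]. exists i. split; [lia | exact Hloc].
  - exists n. split; [lia | lra].
Qed.

Lemma chain_gap_in_step u v n a u' m v' : chain u v n a ->
  u' < m < v' -> u <= m < v -> (forall x, In x (breaks n a) -> ~ u' < x < v') ->
  exists i, (i < n)%nat /\ a i <= u' /\ v' <= a (S i).
Proof.
  intros Ha Hm Hmuv Hgap.
  destruct (chain_locate u v n a m Ha Hmuv) as [i [Hi Hloc]].
  exists i. split; [exact Hi | split]; apply Rnot_lt_le; intros Hlt.
  - apply (Hgap (a i)); [apply in_breaks; lia | split; lra].
  - apply (Hgap (a (S i))); [apply in_breaks; lia | split; lra].
Qed.

Lemma piecewise_single (P : R -> R -> Prop) u v : u < v -> P u v -> piecewise P u v.
Proof.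
  intros Huv HP. exists 1%nat, (fun k => match k with O => u | _ => v end).
  split; [split; [reflexivity | split; [reflexivity|]]|];
    intros [|i] Hi; solve [exact Huv | exact HP | lia].
Qed.

Lemma piecewise_app (P : R -> R -> Prop) u w v :
  piecewise P u w -> piecewise P w v -> piecewise P u v.
Proof.
  intros [n1 [a1 [[A0 [An Astep]] HA]]] [n2 [a2 [[B0 [Bn Bstep]] HB]]].
  set (a k := if (k <=? n1)%nat then a1 k else a2 (k - n1)%nat).
  assert (Hsteps : forall i, (i < n1 + n2)%nat ->
    (exists j, (j < n1)%nat /\ a i = a1 j /\ a (S i) = a1 (S j)) \/
    (exists j, (j < n2)%nat /\ a i = a2 j /\ a (S i) = a2 (S j))).
  { intros i Hi. unfold a.
    destruct (Nat.leb_spec i n1), (Nat.leb_spec (S i) n1); try lia.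
    - left. exists i. repeat split; lia.
    - right. exists 0%nat. replace i with n1 by lia.
      replace (S n1 - n1)%nat with 1%nat by lia. repeat split; [lia | congruence].
    - right. exists (i - n1)%nat.
      replace (S i - n1)%nat with (S (i - n1)) by lia. repeat split; lia. }
  exists (n1 + n2)%nat, a. split; [split; [|split]|].
  - exact A0.
  - unfold a. destruct (Nat.leb_spec (n1 + n2) n1).
    + replace (n1 + n2)%nat with n1 by lia. replace n2 with 0%nat in Bn by lia. congruence.
    + replace (n1 + n2 - n1)%nat with n2 by lia. exact Bn.
  - intros i Hi. destruct (Hsteps i Hi) as [[j [Hj [-> ->]]]|[j [Hj [-> ->]]]]; auto.
  - intros i Hi. destruct (Hsteps i Hi) as [[j [Hj [-> ->]]]|[j [Hj [-> ->]]]]; auto.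
Qed.

Lemma piecewise_of_breaks (P : R -> R -> Prop) (l : list R) u v : u < v ->
  (forall u' v', u <= u' -> u' < v' -> v' <= v ->
     (forall x, In x l -> ~ u' < x < v') -> P u' v') ->
  piecewise P u v.
Proof.
  revert u v. induction l as [|x l IH]; intros u v Huv HP.
  - apply piecewise_single; [exact Huv|]. apply HP; [lra | lra | lra | intros x []].
  - assert (Hout : ~ (u < x < v) -> piecewise P u v).
    { intros Hx. apply IH; [exact Huv|]. intros u' v' Hu' Huv' Hv' Hgap.
      apply HP; [lra | lra | lra|]. intros y [<-|Hy]; [|exact (Hgap y Hy)].
      intros [? ?]. apply Hx. split; lra. }
    destruct (Rlt_dec u x), (Rlt_dec x v); try (apply Hout; intros [? ?]; lra).
    apply piecewise_app with x; apply IH; try lra;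
      intros u' v' Hu' Huv' Hv' Hgap; apply HP; try lra;
      (intros y [<-|Hy]; [intros [? ?]; lra | exact (Hgap y Hy)]).
Qed.

Definition translation_on (f : R -> R) (u v : R) : Prop :=
  exists c, forall x, u <= x < v -> f x = x + c.

Lemma right_continuous_translation_limit f x y d : right_continuous_on_X f ->
  inX x -> 0 < d -> (forall e, 0 < e < d -> f (x + e) = y + e) -> f x = y.
Proof.
  intros Hrc Hx Hd Hf. unfold inX in Hx.
  destruct (Req_dec (f x) y) as [|Hne]; [assumption|exfalso].
  set (eps := Rabs (f x - y) / 2).
  assert (Heps : 0 < eps) by (assert (0 < Rabs (f x - y)) by (apply Rabs_pos_lt; lra); unfold eps; lra).
  destruct (Hrc x Hx eps Heps) as [delta [Hdelta Hnear]].
  set (e := Rmin (Rmin d delta) (Rmin eps (1 - x)) / 2).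
  assert (He : 0 < e /\ e < d /\ e < delta /\ e < eps /\ e < 1 - x).
  { pose proof (Rmin_l (Rmin d delta) (Rmin eps (1 - x))).
    pose proof (Rmin_r (Rmin d delta) (Rmin eps (1 - x))).
    pose proof (Rmin_l d delta). pose proof (Rmin_r d delta).
    pose proof (Rmin_l eps (1 - x)). pose proof (Rmin_r eps (1 - x)).
    assert (0 < Rmin (Rmin d delta) (Rmin eps (1 - x))) by (repeat apply Rmin_pos; lra).
    unfold e. lra. }
  specialize (Hnear (x + e)). rewrite Hf in Hnear by lra.
  assert (Hclose : Rabs (y + e - f x) < eps) by (apply Hnear; unfold inX; lra).
  unfold eps in *. split_Rabs; lra.
Qed.

Lemma IET_rc_iff f : IET_rc f <-> bijX f /\ piecewise (translation_on f) 0 1.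
Proof.
  split.
  - intros [[Hb [n [a [Ha Hpieces]]]] Hrc]. split; [exact Hb|].
    exists n, a. split; [exact Ha|]. intros i Hi.
    destruct (Hpieces i Hi) as [c Hc]. exists c.
    destruct (chain_step_bounds 0 1 n a i Ha Hi) as [H0 [Hlt H1]].
    assert (Hleft : f (a i) = a i + c).
    { apply (right_continuous_translation_limit f (a i) (a i + c) (a (S i) - a i));
        [exact Hrc | unfold inX; lra | lra|].
      intros e He. rewrite Hc by lra. ring. }
    intros x Hx. destruct (Req_dec x (a i)) as [->|Hne]; [exact Hleft | apply Hc; lra].
  - intros [Hb [n [a [Ha Hpieces]]]]. split; [split; [exact Hb|]|].
    + exists n, a. split; [exact Ha|]. intros i Hi.
      destruct (Hpieces i Hi) as [c Hc]. exists c. intros x Hx. apply Hc. lra.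
    + intros x Hx eps Heps.
      destruct (chain_locate 0 1 n a x Ha Hx) as [i [Hi Hloc]].
      destruct (Hpieces i Hi) as [c Hc].
      exists (Rmin eps (a (S i) - x)). split; [apply Rmin_pos; lra|].
      intros y Hy Hxy.
      pose proof (Rmin_l eps (a (S i) - x)). pose proof (Rmin_r eps (a (S i) - x)).
      rewrite (Hc x), (Hc y) by lra. rewrite Rabs_right; lra.
Qed.

Lemma bijX_comp p q : bijX p -> bijX q -> bijX (fun x => p (q x)).
Proof.
  intros [Hp1 [Hp2 Hp3]] [Hq1 [Hq2 Hq3]]. split; [|split].
  - intros x Hx. apply Hp1, Hq1, Hx.
  - intros x y Hx Hy E. apply Hq2; auto.
  - intros y Hy. destruct (Hp3 y Hy) as [z [Hz <-]]. destruct (Hq3 z Hz) as [x [Hx <-]].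
    exists x. split; [exact Hx | reflexivity].
Qed.

Lemma bijX_inv g ginv : bijX g -> inverse_on_X g ginv -> bijX ginv.
Proof.
  intros [H1 [H2 H3]] Hinv. split; [|split].
  - intros x Hx. destruct (H3 x Hx) as [z [Hz <-]]. rewrite (proj1 (Hinv z Hz)). exact Hz.
  - intros x y Hx Hy E. rewrite <- (proj2 (Hinv x Hx)), <- (proj2 (Hinv y Hy)), E. reflexivity.
  - intros y Hy. exists (g y). split; [apply H1, Hy | apply (proj1 (Hinv y Hy))].
Qed.

Lemma preimages_in_X q l : (forall y, inX y -> exists x, inX x /\ q x = y) ->
  exists l', forall y, In y l -> inX y -> exists x, In x l' /\ inX x /\ q x = y.
Proof.
  intros Hsurj. induction l as [|y l [l' IH]].
  - exists []. intros y [].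
  - assert (Hy : exists x, inX y -> inX x /\ q x = y).
    { destruct (Rle_lt_dec 0 y); [destruct (Rlt_le_dec y 1)|].
      - destruct (Hsurj y) as [x Hx]; [split; assumption|]. exists x. intros _. exact Hx.
      - exists 0. intros [_ ?]. lra.
      - exists 0. intros [? _]. lra. }
    destruct Hy as [x Hx]. exists (x :: l'). intros y' [<-|Hin] Hy'.
    + exists x. split; [left; reflexivity | exact (Hx Hy')].
    + destruct (IH y' Hin Hy') as [x' [Hx' Hq]]. exists x'. split; [right; exact Hx' | exact Hq].
Qed.

Lemma piecewise_translation_comp p q : bijX q ->
  piecewise (translation_on p) 0 1 -> piecewise (translation_on q) 0 1 ->
  piecewise (translation_on (fun x => p (q x))) 0 1.
Proof.
  intros [q_X [q_inj q_surj]] [np [ap [Hap Hp]]] [nq [aq [Haq Hq]]].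
  destruct (preimages_in_X q (breaks np ap) q_surj) as [pre Hpre].
  apply piecewise_of_breaks with (l := breaks nq aq ++ pre); [lra|].
  intros u v Hu Huv Hv Hgap.
  set (m := (u + v) / 2).
  destruct (chain_gap_in_step 0 1 nq aq u m v Haq) as [i [Hi [Hui Hvi]]];
    [unfold m; lra | unfold m; lra | intros x Hx; apply Hgap, in_or_app; left; exact Hx|].
  destruct (Hq i Hi) as [c Hc].
  assert (Hq_uv : forall x, u <= x < v -> q x = x + c) by (intros x Hx; apply Hc; lra).
  assert (Hqm : inX (m + c)).
  { rewrite <- Hq_uv by (unfold m; lra). apply q_X. unfold inX, m. lra. }
  destruct (chain_gap_in_step 0 1 np ap (u + c) (m + c) (v + c) Hap) as [j [Hj [Huj Hvj]]];
    [unfold m; lra | exact Hqm | |].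
  { intros y Hy Hyuv.
    assert (Hqy : q (y - c) = y) by (rewrite Hq_uv by lra; ring).
    destruct (Hpre y Hy) as [x [Hx [HxX Hqx]]].
    { rewrite <- Hqy. apply q_X. unfold inX. lra. }
    assert (x = y - c) by (apply q_inj; [exact HxX | unfold inX; lra | congruence]).
    apply (Hgap x); [apply in_or_app; right; exact Hx | split; lra]. }
  destruct (Hp j Hj) as [c' Hc'].
  exists (c + c'). intros x Hx. rewrite Hq_uv, Hc' by lra. ring.
Qed.

Lemma piecewise_translation_inv g ginv : bijX g -> inverse_on_X g ginv ->
  piecewise (translation_on g) 0 1 -> piecewise (translation_on ginv) 0 1.
Proof.
  intros Hb Hinv [n [a [Ha Hpieces]]].
  apply piecewise_of_breaks
    with (l := map g (breaks n a) ++ map (fun i => a (S i) - a i + g (a i)) (seq 0 n)); [lra|].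
  intros u v Hu Huv Hv Hgap.
  set (m := (u + v) / 2).
  assert (Hmuv : u < m < v) by (unfold m; lra).
  assert (Hm : inX m) by (unfold inX; lra).
  destruct (chain_locate 0 1 n a (ginv m) Ha (proj1 (bijX_inv g ginv Hb Hinv) m Hm))
    as [i [Hi Hloc]].
  destruct (Hpieces i Hi) as [c Hc].
  destruct (chain_step_bounds 0 1 n a i Ha Hi) as [H0 [Hlt H1]].
  assert (Hgai : g (a i) = a i + c) by (apply Hc; lra).
  assert (Hgm : m = ginv m + c) by (rewrite <- (Hc (ginv m) Hloc); symmetry; apply Hinv, Hm).
  assert (Hleft : a i + c <= u).
  { apply Rnot_lt_le. intros Hlt'. apply (Hgap (g (a i))); [|split; lra].
    apply in_or_app. left. apply in_map, in_breaks. lia. }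
  assert (Hright : v <= a (S i) + c).
  { apply Rnot_lt_le. intros Hlt'. apply (Hgap (a (S i) - a i + g (a i))); [|split; lra].
    apply in_or_app. right. apply (in_map (fun i => a (S i) - a i + g (a i))), in_seq. lia. }
  exists (- c). intros w Hw.
  assert (Hgw : g (w - c) = w) by (rewrite Hc by lra; ring).
  rewrite <- Hgw at 1. rewrite (proj1 (Hinv (w - c) ltac:(unfold inX; lra))). ring.
Qed.

Lemma IET_rc_comp p q : IET_rc p -> IET_rc q -> IET_rc (fun x => p (q x)).
Proof.
  intros Hp Hq. apply IET_rc_iff in Hp, Hq. destruct Hp as [Hbp Hpp], Hq as [Hbq Hpq].
  apply IET_rc_iff. split; [apply bijX_comp | apply piecewise_translation_comp]; assumption.
Qed.

Lemma IET_rc_inv g ginv : IET_rc g -> inverse_on_X g ginv -> IET_rc ginv.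
Proof.
  intros Hg Hinv. apply IET_rc_iff in Hg. destruct Hg as [Hb Hpg].
  apply IET_rc_iff. split; [apply (bijX_inv g) | apply (piecewise_translation_inv g)]; assumption.
Qed.

Definition exchange (s r x : R) : R :=
  if Rlt_dec x s then x + (r - s) else if Rlt_dec x r then x - s else x.

Lemma exchange_bijX s r : 0 <= s <= r -> r <= 1 -> bijX (exchange s r).
Proof.
  intros Hs Hr. unfold bijX, inX, exchange. split; [|split].
  - intros x Hx. destruct (Rlt_dec x s), (Rlt_dec x r); lra.
  - intros x y Hx Hy.
    destruct (Rlt_dec x s), (Rlt_dec x r), (Rlt_dec y s), (Rlt_dec y r); intros; lra.
  - intros y Hy. destruct (Rlt_dec y (r - s)); [|destruct (Rlt_dec y r)].
    + exists (y + s). destruct (Rlt_dec (y + s) s), (Rlt_dec (y + s) r); split; lra.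
    + exists (y - (r - s)).
      destruct (Rlt_dec (y - (r - s)) s), (Rlt_dec (y - (r - s)) r); split; lra.
    + exists y. destruct (Rlt_dec y s), (Rlt_dec y r); split; lra.
Qed.

Lemma exchange_IET_rc s r : 0 <= s <= r -> r <= 1 -> IET_rc (exchange s r).
Proof.
  intros Hs Hr. apply IET_rc_iff. split; [apply exchange_bijX; assumption|].
  apply piecewise_of_breaks with (l := [s; r]); [lra|].
  intros u v Hu Huv Hv Hgap. unfold translation_on, exchange.
  destruct (Rle_or_lt v s) as [Hvs|Hsv].
  - exists (r - s). intros x Hx. destruct (Rlt_dec x s); [reflexivity | lra].
  - assert (Hsu : s <= u).
    { apply Rnot_lt_le. intros Hlt. apply (Hgap s); [left; reflexivity | split; lra]. }
    destruct (Rle_or_lt v r) as [Hvr|Hrv].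
    + exists (- s). intros x Hx. destruct (Rlt_dec x s); [lra|]. destruct (Rlt_dec x r); [ring | lra].
    + assert (Hru : r <= u).
      { apply Rnot_lt_le. intros Hlt. apply (Hgap r); [right; left; reflexivity | split; lra]. }
      exists 0. intros x Hx. destruct (Rlt_dec x s); [lra|]. destruct (Rlt_dec x r); [lra | ring].
Qed.

Lemma conj_rc_no_reflection g ginv u v c : inverse_on_X g ginv -> bijX g ->
  (forall h, IET_rc h -> right_continuous_on_X (fun x => g (h (ginv x)))) ->
  0 <= u < v -> v <= 1 -> ~ (forall x, u < x < v -> g x = - x + c).
Proof.
  intros Hinv [g_X [g_inj _]] Hconj Huv Hv Hrefl.
  set (q := (u + v) / 2). set (r := (q + v) / 2).
  assert (Hqr : u < q < r /\ r < v) by (unfold r, q; lra).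
  assert (Hq_X : inX q) by (unfold inX; lra).
  assert (Hjump : g (exchange q r (ginv (g q))) = g r).
  { apply (right_continuous_translation_limit (fun x => g (exchange q r (ginv x))) (g q) (g r) (q - u)).
    - apply Hconj, exchange_IET_rc; lra.
    - apply g_X, Hq_X.
    - lra.
    - intros e He.
      assert (Hgqe : g q + e = g (q - e)) by (rewrite !Hrefl by lra; ring).
      rewrite Hgqe, (proj1 (Hinv (q - e) ltac:(unfold inX; lra))).
      unfold exchange. destruct (Rlt_dec (q - e) q); [|lra].
      rewrite !Hrefl by lra. ring. }
  rewrite (proj1 (Hinv q Hq_X)) in Hjump. unfold exchange in Hjump.
  destruct (Rlt_dec q q); [lra|]. destruct (Rlt_dec q r); [|lra].
  replace (q - q) with 0 in Hjump by ring.
  assert (0 = r) by (apply g_inj; [unfold inX; lra | unfold inX; lra | exact Hjump]).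
  lra.
Qed.

Lemma conj_rc_left_endpoint g ginv u v c : inverse_on_X g ginv -> bijX g ->
  (forall h, IET_rc h -> right_continuous_on_X (fun x => ginv (h (g x)))) ->
  0 <= u < v -> v <= 1 -> (forall x, u < x < v -> g x = x + c) -> g u = u + c.
Proof.
  intros Hinv [g_X [g_inj _]] Hconj Huv Hv Htr.
  set (z := (u + v) / 2). set (d := z - u).
  assert (Hd : 0 < d <= 1) by (unfold d, z; lra).
  set (h := exchange (1 - d) 1).
  destruct (exchange_bijX (1 - d) 1 ltac:(lra) ltac:(lra)) as [h_X [h_inj _]].
  assert (Hshift : forall y, y < 1 - d -> h y = y + d).
  { intros y Hy. unfold h, exchange. destruct (Rlt_dec y (1 - d)); [ring | lra]. }
  assert (Himage : forall x, u < x < v -> 0 <= x + c < 1).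
  { intros x Hx. rewrite <- Htr by lra. apply g_X. unfold inX. lra. }
  assert (Hc0 : 0 <= u + c).
  { apply Rnot_lt_le. intros Hneg.
    pose proof (Rmin_l (- (u + c)) (v - u)). pose proof (Rmin_r (- (u + c)) (v - u)).
    assert (0 < Rmin (- (u + c)) (v - u)) by (apply Rmin_pos; lra).
    pose proof (Himage (u + Rmin (- (u + c)) (v - u) / 2)). lra. }
  assert (Hlimit : ginv (h (g u)) = z).
  { apply (right_continuous_translation_limit (fun x => ginv (h (g x))) u z (v - z));
      [apply Hconj, exchange_IET_rc; lra | unfold inX; lra | unfold z; lra|].
    intros e He.
    assert (Hze : u < z + e < v) by (unfold z in *; lra).
    rewrite (Htr (u + e)) by (unfold z in He; lra).
    rewrite Hshift by (pose proof (Himage (z + e) Hze); unfold d in *; lra).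
    replace (u + e + c + d) with (g (z + e)) by (rewrite Htr by exact Hze; unfold d; ring).
    apply Hinv. unfold inX. lra. }
  assert (Hgu_X : inX (g u)) by (apply g_X; unfold inX; lra).
  assert (Hz : u < z < v) by (unfold z; lra).
  apply h_inj; [exact Hgu_X | pose proof (Himage z Hz); unfold inX, d in *; lra|].
  fold h. rewrite (Hshift (u + c)) by (pose proof (Himage z Hz); unfold d in *; lra).
  rewrite <- (proj2 (Hinv (h (g u)) (h_X (g u) Hgu_X))), Hlimit, Htr by exact Hz.
  unfold d. ring.
Qed.

Theorem proposition5p3 :
  forall (g ginv : R -> R), inverse_on_X g ginv ->
    ((IET_bowtie g /\ normalizes IET_rc g ginv) <-> IET_rc g).
Proof.
  intros g ginv Hinv. split.
  - intros [[Hb [n [a [Ha Hpieces]]]] [Hconj Hconj']].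
    apply IET_rc_iff. split; [exact Hb|]. exists n, a. split; [exact Ha|].
    intros i Hi. destruct (chain_step_bounds 0 1 n a i Ha Hi) as [H0 [Hlt H1]].
    destruct (Hpieces i Hi) as [c [Htr|Hrefl]].
    + exists c. intros x Hx. destruct (Req_dec x (a i)) as [->|Hne]; [|apply Htr; lra].
      apply (conj_rc_left_endpoint g ginv (a i) (a (S i))); try assumption; [|lra].
      intros h Hh. exact (proj2 (Hconj' h Hh)).
    + exfalso. apply (conj_rc_no_reflection g ginv (a i) (a (S i)) c Hinv Hb); try lra.
      * intros h Hh. exact (proj2 (Hconj h Hh)).
      * exact Hrefl.
  - intros Hg. pose proof (IET_rc_inv g ginv Hg Hinv) as Hginv. split.
    + destruct Hg as [[Hb [n [a [Ha Hpieces]]]] _]. split; [exact Hb|].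
      exists n, a. split; [exact Ha|]. intros i Hi.
      destruct (Hpieces i Hi) as [c Hc]. exists c. left. exact Hc.
    + split; intros h Hh.
      * apply (IET_rc_comp g (fun x => h (ginv x))); [|apply IET_rc_comp]; assumption.
      * apply (IET_rc_comp ginv (fun x => h (g x))); [|apply IET_rc_comp]; assumption.
Qed.
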